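(* For every integer $L\ge 0$, every integer $l\ge 1$ and every integer $n\ge 0$, $$S_L(n+1,l)=\sum_{k=l-1}^{n}\binom{n}{k}\binom{n+1}{k}^{L}S_L(k,l-1),$$ with $S_L(0,0)=1$ and $S_L(n,0)=0$ for $n\ge1$. Consequently all $S_L(n,l)$ are nonnegative integers (positive for $1\le l\le n$).
   Context: For an integer $L\ge 0$ let ${}_0F_L(z)=\sum_{n=0}^{\infty}\frac{z^n}{(n!)^{L+1}}$. Define the numbers $S_L(n,l)$ ($n,l\ge 0$; with $S_L(n,l)=0$ for $l>n$) by the formal power series identities $\frac{({}_0F_L(z)-1)^l}{l!}=\sum_{n\ge l}\frac{S_L(n,l)}{(n!)^{L+1}}z^n$ for each $l\ge 0$; equivalently $\exp\big(x({}_0F_L(z)-1)\big)=\sum_{n\ge0}\Big[\sum_{k=0}^{n}S_L(n,k)x^k\Big]\frac{z^n}{(n!)^{L+1}}$. For $L=0$ these are the Stirling numbers of the second kind. *)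

From mathcomp Require Import all_boot all_order all_algebra.
Set Implicit Arguments. Unset Strict Implicit. Unset Printing Implicit Defensive.
Import Order.TTheory GRing.Theory Num.Theory.
Local Open Scope ring_scope.

Definition fps := nat -> rat.

Definition fps_mul (a b : fps) : fps :=
  fun n => \sum_(i < n.+1) a i * b (n - i)%N.

Definition fps_one : fps := fun n => if n == 0%N then 1 else 0.

Definition fps_pow (a : fps) (l : nat) : fps := iter l (fps_mul a) fps_one.

Definition F0L (L : nat) : fps := fun n => ((n`!)%:R ^+ L.+1)^-1.

Definition F0L_m1 (L : nat) : fps := fun n => if n == 0%N then 0 else F0L L n.

Definition SL (L n l : nat) : rat :=
  (n`!)%:R ^+ L.+1 * (fps_pow (F0L_m1 L) l n / (l`!)%:R).

(** The derivative of [(F - 1)^l / l!] is [(F - 1)^(l-1) / (l-1)! * F'] with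
    [F = 0F_L]. Comparing coefficients of [z^n] and clearing factorials turns
    the weight [(n+1)!^(L+1) (n+1-k) / ((n+1) (k! (n+1-k)!)^(L+1))] into
    ['C(n, k) 'C(n+1, k)^L], which is the recurrence. *)
From mathcomp Require Import all_boot all_order all_algebra.
From mathcomp Require Import zify ring.
Import Order.TTheory GRing.Theory Num.Theory.
Local Open Scope ring_scope.

Lemma fps_powS (a : fps) l : fps_pow a l.+1 = fps_mul a (fps_pow a l).
Proof. by []. Qed.

Lemma fps_pow_poly (a : fps) N l n : (n <= N)%N ->
  fps_pow a l n = ((\poly_(i < N.+1) a i) ^+ l)`_n.
Proof.
elim: l n => [|l IH] n le_nN.
  by rewrite expr0 coef1 /fps_pow /= /fps_one; case: (n == 0%N).
rewrite exprS coefM fps_powS /fps_mul; apply: eq_bigr => i _.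
have lt_iN : (i < N.+1)%N by rewrite (leq_trans (ltn_ord i)).
by rewrite coef_poly lt_iN IH //; lia.
Qed.

Lemma fps_pow_small (a : fps) l n : a 0%N = 0 -> (n < l)%N -> fps_pow a l n = 0.
Proof.
move=> a0; elim: l n => [|l IH] n // lt_nl.
rewrite fps_powS /fps_mul big1 // => -[[|i] lt_in] _ /=; first by rewrite a0 mul0r.
by rewrite IH ?mulr0 //; lia.
Qed.

(* Coefficient of [z^n] in [(a^(l+1))' = (l+1) a^l a']. *)
Lemma fps_pow_deriv (a : fps) l n :
  fps_pow a l.+1 n.+1 *+ n.+1 =
  (\sum_(k < n.+1) fps_pow a l k * (a (n.+1 - k)%N *+ (n.+1 - k))) *+ l.+1.
Proof.
set p := \poly_(i < n.+2) a i.
rewrite (@fps_pow_poly _ _ _ _ (leqnn n.+1)) -/p -coef_deriv deriv_exp coefMn mulrC.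
rewrite coefM; congr (_ *+ _); apply: eq_bigr => -[k lt_kn] _ /=.
rewrite coef_deriv coef_poly -(@fps_pow_poly _ _ _ _ (ltnW lt_kn)) subSn //.
by rewrite ifT //; lia.
Qed.

Lemma fact_neq0 (R : numDomainType) n : n`!%:R != 0 :> R.
Proof. by rewrite pnatr_eq0 -lt0n fact_gt0. Qed.

Lemma F0L_bin L m k : (k <= m)%N ->
  m`!%:R ^+ L.+1 * F0L L (m - k)%N = 'C(m, k)%:R ^+ L.+1 * k`!%:R ^+ L.+1.
Proof.
move=> le_km; rewrite /F0L -(bin_fact le_km) !natrM !exprMn mulrA.
by rewrite mulfK // expf_neq0 // fact_neq0.
Qed.

Lemma bin_weight (R : numFieldType) L n k :
  'C(n, k)%:R * 'C(n.+1, k)%:R ^+ L =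
  'C(n.+1, k)%:R ^+ L.+1 * (n.+1 - k)%:R / n.+1%:R :> R.
Proof.
have nz_n1 : n.+1%:R != 0 :> R by rewrite pnatr_eq0.
apply: (canRL (mulfK nz_n1)); rewrite -!natrX -!natrM; congr _%:R.
by rewrite -mulnA mulnCA (mulnC 'C(n, k)) mul_bin_down expnSr; ring.
Qed.

Lemma SL_small L n l : (n < l)%N -> SL L n l = 0.
Proof. by move=> lt_nl; rewrite /SL fps_pow_small ?mul0r ?mulr0. Qed.

Lemma SL_rec_ord L n l :
  SL L n.+1 l.+1 =
  \sum_(k < n.+1) 'C(n, k)%:R * 'C(n.+1, k)%:R ^+ L * SL L k l.
Proof.
have nz_n1 : n.+1%:R != 0 :> rat by rewrite pnatr_eq0.
rewrite {1}/SL -[fps_pow _ _ _](mulfK nz_n1) mulr_natr fps_pow_deriv.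
set S := \sum_(k < n.+1) _ * _.
rewrite [(l.+1)`!]factS natrM -[S *+ _]mulr_natr.
have -> : forall x, x * (S * l.+1%:R / n.+1%:R / (l.+1%:R * l`!%:R)) =
                    x / n.+1%:R / l`!%:R * S.
  by move=> x; field; rewrite fact_neq0 !nat1r !pnatr_eq0.
rewrite mulr_sumr; apply: eq_bigr => -[k lt_kn] _ /=.
have le_kn1 : (k <= n.+1)%N := ltnW lt_kn.
have F0L_m1E : F0L_m1 L (n.+1 - k)%N = F0L L (n.+1 - k)%N.
  by rewrite /F0L_m1 subn_eq0 leqNgt lt_kn.
rewrite F0L_m1E bin_weight /SL.
have regroup (A F c : rat) m :
  A / n.+1%:R / l`!%:R * (c * (F *+ m)) = A * F * m%:R / n.+1%:R * (c / l`!%:R).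
  by rewrite -mulr_natr; field; rewrite fact_neq0 nat1r pnatr_eq0.
by rewrite regroup F0L_bin //; field; rewrite fact_neq0 nat1r pnatr_eq0.
Qed.

Lemma SL_rec L n l :
  SL L n.+1 l.+1 =
  \sum_(l <= k < n.+1) 'C(n, k)%:R * 'C(n.+1, k)%:R ^+ L * SL L k l.
Proof.
rewrite SL_rec_ord big_geq_mkord [RHS]big_mkcond /=; apply: eq_bigr => k _.
by case: leqP => // lt_kl; rewrite SL_small ?mulr0.
Qed.

Lemma SL00 L : SL L 0 0 = 1.
Proof. by rewrite /SL /= expr1n mul1r divr1. Qed.

Lemma SLn0 L n : (0 < n)%N -> SL L n 0 = 0.
Proof. by case: n => // n _; rewrite /SL /= /fps_one mul0r mulr0. Qed.

Lemma bin_weight_nat (R : archiNumDomainType) L n k :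
  'C(n, k)%:R * 'C(n.+1, k)%:R ^+ L \is a @Num.nat R.
Proof. by rewrite rpredM ?rpredX ?natr_nat. Qed.

Lemma SL_nat L n l : SL L n l \is a Num.nat.
Proof.
elim: l n => [|l IH] [|n]; rewrite ?SL00 ?SLn0 //; first by rewrite SL_small.
rewrite SL_rec; apply: rpred_sum => k _.
by rewrite rpredM ?IH ?bin_weight_nat.
Qed.

Lemma bin_weight_gt0 (R : numDomainType) L n k : (k <= n)%N ->
  0 < 'C(n, k)%:R * 'C(n.+1, k)%:R ^+ L :> R.
Proof.
move=> le_kn; apply: mulr_gt0; last apply: exprn_gt0; rewrite ltr0n bin_gt0 //.
exact: leqW.
Qed.

Lemma SL_diag_gt0 L l : 0 < SL L l l.
Proof.
elim: l => [|l IH]; first by rewrite SL00.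
by rewrite SL_rec big_nat1 mulr_gt0 ?bin_weight_gt0.
Qed.

Lemma SL_gt0 L n l : (0 < l <= n)%N -> 0 < SL L n l.
Proof.
case: n l => [|n] [|l] //= le_ln.
rewrite SL_rec big_ltn // ltr_pwDl //.
  by rewrite mulr_gt0 ?bin_weight_gt0 ?SL_diag_gt0.
by apply: sumr_ge0 => k _; rewrite natr_ge0 // rpredM ?SL_nat ?bin_weight_nat.
Qed.

Theorem mainTheorem2 :
  (forall L l n : nat, (1 <= l)%N ->
     SL L n.+1 l =
     \sum_(l.-1 <= k < n.+1) ('C(n, k)%:R * ('C(n.+1, k)%:R) ^+ L * SL L k l.-1))
  /\ (forall L : nat, SL L 0 0 = 1)
  /\ (forall L n : nat, (1 <= n)%N -> SL L n 0 = 0)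
  /\ (forall L n l : nat, exists m : nat, SL L n l = m%:R)
  /\ (forall L n l : nat, (1 <= l <= n)%N -> 0 < SL L n l).
Proof.
split; first by move=> L [|l] n // _; exact: SL_rec.
split; first exact: SL00.
split; first exact: SLn0.
split; first by move=> L n l; apply/natrP/SL_nat.
exact: SL_gt0.
Qed.
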